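(* Let $g:\{\pm1\}^{m_1}\times\{\pm1\}^{m_2}\to\{\pm1\}$ be a gadget with $\hat g(S,T)=0$ whenever $S=\emptyset$ or $T=\emptyset$. Then for all $k,d,n$, $$L_{1,k}(\mathrm{XOR},d,1,1,n)\le\Bigl(\max_{S,T}|\hat g(S,T)|\Bigr)^{-k}L_{1,k}(g,d,m_1,m_2,n)\le 2^{(m_1+m_2)k/2}L_{1,k}(g,d,m_1,m_2,n).$$
   Context: $\hat g(S,T)=\mathbb{E}[g(\mathbf{x},\mathbf{y})\prod_{j\in S}\mathbf{x}_j\prod_{j\in T}\mathbf{y}_j]$ for uniform $\mathbf{x}\in\{\pm1\}^{m_1},\mathbf{y}\in\{\pm1\}^{m_2}$. For a randomized two-party protocol $\mathcal{C}:(\{\pm1\}^{m_1})^n\times(\{\pm1\}^{m_2})^n\to[-1,1]$ (value = expected output over internal randomness; inputs are $n$ blocks $x_i\in\{\pm1\}^{m_1}$, $y_i\in\{\pm1\}^{m_2}$), its $g$-fiber is $\mathcal{C}_{\downarrow g}(z)=\mathbb{E}[\mathcal{C}(\mathbf{x},\mathbf{y})\mid g(\mathbf{x}_i,\mathbf{y}_i)=z_i\ \forall i]$ for uniform $\mathbf{x},\mathbf{y}$. For $f:\{\pm1\}^n\to\mathbb{R}$, $L_{1,k}(f)=\sum_{|I|=k}|\hat f(I)|$. $L_{1,k}(g,d,m_1,m_2,n)$ denotes the supremum of $L_{1,k}(\mathcal{C}_{\downarrow g})$ over all such randomized protocols with at most $d$ bits of communication. $\mathrm{XOR}:\{\pm1\}\times\{\pm1\}\to\{\pm1\}$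 is the gadget $\mathrm{XOR}(a,b)=ab$ (so $m_1=m_2=1$). *)

From HB Require Import structures.
From mathcomp Require Import all_boot all_order all_algebra.
From mathcomp Require Import classical_sets reals.
Set Implicit Arguments. Unset Strict Implicit. Unset Printing Implicit Defensive.
Import Order.TTheory GRing.Theory Num.Theory.
Local Open Scope ring_scope.
Local Open Scope classical_set_scope.

(* A +-1 value is encoded by a bool: sgn false = 1, sgn true = -1. *)
Definition sgn {R : ringType} (b : bool) : R := if b then -1 else 1.

Notation cube m := {ffun 'I_m -> bool}.
Notation blocks n m := {ffun 'I_n -> cube m}.

Definition Exp {R : realType} (T : finType) (F : T -> R) : R :=
  (\sum_(t : T) F t) / #|T|%:R.

Definition chi {R : realType} m (S : {set 'I_m}) (x : cube m) : R :=
  \prod_(j in S) sgn (x j).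

Definition gadget m1 m2 := cube m1 -> cube m2 -> bool.

Definition ghat {R : realType} m1 m2 (g : gadget m1 m2)
    (S : {set 'I_m1}) (T : {set 'I_m2}) : R :=
  Exp (fun xy : cube m1 * cube m2 =>
         sgn (g xy.1 xy.2) * chi S xy.1 * chi T xy.2).

Definition max_ghat {R : realType} m1 m2 (g : gadget m1 m2) : R :=
  \big[Num.max/0]_(ST : {set 'I_m1} * {set 'I_m2}) `|ghat g ST.1 ST.2|.

(* XOR gadget, m1 = m2 = 1: XOR(a,b) = a b; in the bool encoding this is xor *)
Definition xor_gadget : gadget 1 1 := fun a b => a ord0 (+) b ord0.

(* Deterministic two-party protocol trees: Alice holds A, Bob holds B.
   Each internal node is one bit sent by its owner, computed from that
   owner's input; leaves carry the output bit (a +-1 value). *)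
Inductive proto (A B : Type) :=
| Leaf of bool
| NodeA of (A -> bool) & proto A B & proto A B
| NodeB of (B -> bool) & proto A B & proto A B.
Arguments Leaf {A B}.

(* communication cost = depth of the tree *)
Fixpoint depth A B (p : proto A B) : nat :=
  match p with
  | Leaf _ => 0
  | NodeA _ l r => (maxn (depth l) (depth r)).+1
  | NodeB _ l r => (maxn (depth l) (depth r)).+1
  end.

Fixpoint run A B (p : proto A B) (x : A) (y : B) : bool :=
  match p with
  | Leaf b => b
  | NodeA f l r => if f x then run r x y else run l x y
  | NodeB f l r => if f y then run r x y else run l x y
  end.

(* A randomized (public-coin) protocol: a finite probability distribution
   over deterministic protocols, given as a weighted list. *)
Definition rproto (R : realType) A B := seq (R * proto A B).

Definition rproto_ok {R : realType} A B (d : nat) (P : rproto R A B) : Prop :=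
  [/\ all (fun wp => 0 <= wp.1) P,
      \sum_(wp <- P) wp.1 = 1
    & all (fun wp => depth wp.2 <= d)%N P].

Definition rvalue {R : realType} A B (P : rproto R A B) (x : A) (y : B) : R :=
  \sum_(wp <- P) wp.1 * sgn (run wp.2 x y).

Definition fiber {R : realType} m1 m2 (g : gadget m1 m2) n
    (C : blocks n m1 -> blocks n m2 -> R) (z : cube n) : R :=
  let cond := fun xy : blocks n m1 * blocks n m2 =>
                [forall i, g (xy.1 i) (xy.2 i) == z i] in
  (\sum_(xy | cond xy) C xy.1 xy.2) / #|[pred xy | cond xy]|%:R.

Definition fhat {R : realType} n (f : cube n -> R) (I : {set 'I_n}) : R :=
  Exp (fun z : cube n => f z * chi I z).

Definition L1k {R : realType} n (k : nat) (f : cube n -> R) : R :=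
  \sum_(I : {set 'I_n} | #|I| == k) `|fhat f I|.

Definition L1k_gadget {R : realType} m1 m2 (g : gadget m1 m2) (k d n : nat) : R :=
  sup [set L1k k (fiber g (rvalue P)) | P in
         [set P : rproto R (blocks n m1) (blocks n m2) | rproto_ok d P]].

(* Imported before finset, so that [set0] below is the empty finset. *)
From mathcomp Require Import classical_sets reals.
From mathcomp Require Import all_boot all_order all_algebra.
From mathcomp Require Import ring lra.
Set Implicit Arguments. Unset Strict Implicit. Unset Printing Implicit Defensive.
Import Order.TTheory GRing.Theory Num.Theory.
Local Open Scope ring_scope.

(* Let (S, T) maximise |ghat g S T|.  A protocol for XOR^n becomes one for
   g^n when Alice replaces each block x_i by its parity over S and Bob each
   y_i by its parity over T.  Since g is balanced, every fiber of g^n has the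
   same size, so the Fourier coefficients of the g-fiber of a protocol are
   plain correlations with prod_{i in I} g(x_i, y_i).  Conditioned on the
   parities (a_i, b_i), the blocks are independent and, as g has no Fourier
   mass on S = set0 or T = set0, the block i contributes a_i b_i ghat(S,T).
   Hence the degree-k part of the simulated g-fiber is that of the XOR-fiber
   scaled by ghat(S,T)^k.  Finally Parseval, sum ghat^2 = 1 over 2^(m1+m2)
   coefficients, gives max |ghat| >= 2^(-(m1+m2)/2). *)

Lemma sgnE {R : ringType} (b : bool) : sgn b = (-1) ^+ b :> R.
Proof. by case: b. Qed.

Lemma sgn_addb {R : ringType} (a b : bool) : sgn (a (+) b) = sgn a * sgn b :> R.
Proof. by rewrite !sgnE signr_addb. Qed.

Lemma normr_sgn {R : numDomainType} (b : bool) : `|sgn b : R| = 1.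
Proof. by rewrite sgnE normr_sign. Qed.

Lemma eqb_sgn {R : realFieldType} (a b : bool) : (a == b)%:R = (1 + sgn a * sgn b) / 2 :> R.
Proof. by case: a; case: b; rewrite /sgn /=; lra. Qed.

Lemma card_cube m : #|{: cube m}| = (2 ^ m)%N.
Proof. by rewrite card_ffun card_bool card_ord. Qed.

Lemma card_cube_pair_gt0 m1 m2 : (0 < #|{: cube m1 * cube m2}|)%N.
Proof. by rewrite card_prod !card_cube muln_gt0 !expn_gt0. Qed.

Lemma card_sets m : #|{: {set 'I_m}}| = (2 ^ m)%N.
Proof.
transitivity #|powerset [set: 'I_m]|; last by rewrite card_powerset cardsT card_ord.
by apply: eq_card => S; rewrite !inE subsetT.
Qed.

Section Expectation.
Variable R : realType.

Lemma eq_Exp (T : finType) (F G : T -> R) : F =1 G -> Exp F = Exp G.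
Proof. by move=> FG; rewrite /Exp; under eq_bigr do rewrite FG. Qed.

Lemma Exp_cst (T : finType) (a : R) : (0 < #|T|)%N -> Exp (fun _ : T => a) = a.
Proof.
by move=> T_gt0; rewrite /Exp sumr_const -[a *+ _]mulr_natr mulfK // pnatr_eq0 -lt0n.
Qed.

Lemma ExpD (T : finType) (F G : T -> R) : Exp (fun t => F t + G t) = Exp F + Exp G.
Proof. by rewrite /Exp big_split mulrDl. Qed.

Lemma ExpZ (T : finType) (a : R) (F : T -> R) : Exp (fun t => a * F t) = a * Exp F.
Proof. by rewrite /Exp -mulr_sumr mulrA. Qed.

Lemma Exp_sum (T J : finType) (F : J -> T -> R) :
  Exp (fun t => \sum_j F j t) = \sum_j Exp (F j).
Proof. by rewrite /Exp exchange_big mulr_suml. Qed.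

Lemma Exp_pair (A B : finType) (F : A -> B -> R) :
  Exp (fun t : A * B => F t.1 t.2) = Exp (fun a => Exp (F a)).
Proof. by rewrite /Exp card_prod natrM invfM mulrA -pair_bigA /= -mulr_suml mulrAC. Qed.

Lemma Exp_pair_mul (A B : finType) (F : A -> R) (G : B -> R) :
  Exp (fun t : A * B => F t.1 * G t.2) = Exp F * Exp G.
Proof. by rewrite /Exp card_prod natrM invfM mulrACA big_distrlr /= pair_bigA. Qed.

Lemma Exp_ffun_prod (I A : finType) (F : I -> A -> R) :
  Exp (fun x : {ffun I -> A} => \prod_i F i (x i)) = \prod_i Exp (F i).
Proof. by rewrite /Exp card_ffun natrX -prodr_const -bigA_distr_bigA -prodf_div. Qed.

Lemma Exp_ffun_pair_prod (I A B : finType) (F : I -> A -> B -> R) :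
  Exp (fun xy : {ffun I -> A} * {ffun I -> B} => \prod_i F i (xy.1 i) (xy.2 i)) =
  \prod_i Exp (fun uv : A * B => F i uv.1 uv.2).
Proof.
rewrite (Exp_pair (fun (x : {ffun I -> A}) (y : {ffun I -> B}) => \prod_i F i (x i) (y i))).
under eq_Exp => x do rewrite (Exp_ffun_prod (fun i => F i (x i))).
rewrite (Exp_ffun_prod (fun i a => Exp (F i a))).
by apply: eq_bigr => i _; rewrite Exp_pair.
Qed.

Lemma Exp_fiber_uniform (A B : finType) (phi : A -> B) (c : R) (F : A -> R) (G : B -> R) :
  (forall b, #|[set a | phi a == b]|%:R = c) ->
  Exp (fun b => (\sum_(a | phi a == b) F a) / c * G b) = Exp (fun a => F a * G (phi a)).
Proof.
move=> card_fiber.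
have cardA : #|A|%:R = c * #|B|%:R.
  rewrite -sum1_card (partition_big phi xpredT) //= natr_sum.
  under eq_bigr do rewrite sum1dep_card card_fiber.
  by rewrite sumr_const mulr_natr.
rewrite /Exp cardA invfM mulrA (partition_big phi xpredT) //= [in RHS]mulr_suml.
congr (_ / _); apply: eq_bigr => b _.
rewrite mulrAC !mulr_suml; apply: eq_bigr => a /eqP <-.
by rewrite mulrAC.
Qed.

Lemma normr_mean_le1 (T : finType) (P : pred T) (F : T -> R) :
  (forall t, `|F t| <= 1) -> `|(\sum_(t | P t) F t) / #|P|%:R| <= 1.
Proof.
move=> F_le1; have [->|P_gt0] := posnP #|P|; first by rewrite invr0 mulr0 normr0 ler01.
rewrite normrM normfV normr_nat ler_pdivrMr ?ltr0n // mul1r.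
rewrite -sum1_card natr_sum; apply: le_trans (ler_norm_sum _ _ _) _.
exact: ler_sum.
Qed.

Lemma natr_forall (I : finType) (P : pred I) : [forall i, P i]%:R = \prod_i (P i)%:R :> R.
Proof.
have [allP|] := forallP; first by rewrite big1 // => i _; rewrite allP.
by move=> /forallP/forallPn[i Pi]; rewrite (bigD1 i) //= (negbTE Pi) mul0r.
Qed.

Lemma parseval_of_completeness (T I : finType) (phi : I -> T -> R) (f : T -> R) :
  (forall p q, \sum_i phi i p * phi i q = (p == q)%:R * #|T|%:R) ->
  \sum_i Exp (fun t => f t * phi i t) ^+ 2 = Exp (fun t => f t ^+ 2).
Proof.
move=> complete; rewrite /Exp.
have [T0|T_gt0] := posnP #|T|.
  by rewrite T0 mulr0n invr0 mulr0 big1 // => i _; rewrite mulr0 expr0n.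
have inner p : \sum_q \sum_i f p * phi i p * (f q * phi i q) = f p ^+ 2 * #|T|%:R.
  have diag q : \sum_i f p * phi i p * (f q * phi i q) = f p * f q * ((p == q)%:R * #|T|%:R).
    by rewrite -complete big_distrr; apply: eq_bigr => i _; rewrite mulrACA.
  under eq_bigr do rewrite diag.
  rewrite (bigD1 p) //= big1 ?addr0 => [|q /negbTE qp]; first by rewrite eqxx mul1r expr2.
  by rewrite eq_sym qp mul0r mulr0.
under eq_bigr do rewrite expr_div_n expr2 big_distrlr /=.
rewrite -big_distrl /= exchange_big /=.
under eq_bigr do rewrite exchange_big inner.
by rewrite -big_distrl /= expr2 invfM mulrA mulfK // pnatr_eq0 -lt0n.
Qed.

End Expectation.

Section Characters.
Variable R : realType.

Lemma chi_set0 m (u : cube m) : chi set0 u = 1 :> R.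
Proof. by rewrite /chi big_set0. Qed.

Lemma normr_chi m (S : {set 'I_m}) (u : cube m) : `|chi S u : R| = 1.
Proof. by rewrite /chi normr_prod big1 // => j _; rewrite normr_sgn. Qed.

Lemma Exp_chi m (S : {set 'I_m}) : Exp (chi S) = (S == set0)%:R :> R.
Proof.
rewrite /chi; under eq_Exp do rewrite big_mkcond /=.
rewrite (Exp_ffun_prod (fun j (b : bool) => if j \in S then sgn b else 1)).
have -> : (S == set0) = [forall j, j \notin S].
  apply/eqP/forallP => [-> j|notS]; first by rewrite inE.
  by apply/setP => j; rewrite inE (negbTE (notS j)).
rewrite natr_forall; apply: eq_bigr => j _.
by rewrite /Exp big_bool card_bool /sgn; case: (j \in S) => /=; lra.
Qed.

Lemma sum_chiM m (u v : cube m) :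
  \sum_(S : {set 'I_m}) chi S u * chi S v = (u == v)%:R * 2 ^+ m :> R.
Proof.
have -> : (u == v) = [forall j, u j == v j] by apply/eqP/eqfunP => [->|/ffunP].
rewrite natr_forall -[in 2 ^+ m](card_ord m) -prodr_const -big_split /=.
under [RHS]eq_bigr do rewrite eqb_sgn divfK ?pnatr_eq0 // addrC.
rewrite bigA_distr; apply: eq_bigr => S _.
by rewrite /chi -big_split big_mkcond.
Qed.

Definition par m (S : {set 'I_m}) (u : cube m) : bool := \big[addb/false]_(j in S) u j.

Lemma sgn_par m (S : {set 'I_m}) (u : cube m) : sgn (par S u) = chi S u :> R.
Proof. exact: (big_morph _ sgn_addb). Qed.

End Characters.

Section Gadgets.
Variable R : realType.

Lemma parseval m1 m2 (g : gadget m1 m2) :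
  \sum_(ST : {set 'I_m1} * {set 'I_m2}) ghat g ST.1 ST.2 ^+ 2 = 1 :> R.
Proof.
pose phi (ST : {set 'I_m1} * {set 'I_m2}) (uv : cube m1 * cube m2) : R :=
  chi ST.1 uv.1 * chi ST.2 uv.2.
have complete p q :
    \sum_ST phi ST p * phi ST q = (p == q)%:R * #|{: cube m1 * cube m2}|%:R.
  case: p q => [u v] [u' v']; rewrite /phi /=.
  rewrite -(pair_bigA _ (fun S T => chi S u * chi T v * (chi S u' * chi T v'))) /=.
  under eq_bigr do under eq_bigr do rewrite mulrACA.
  rewrite -big_distrlr /= !sum_chiM xpair_eqE card_prod !card_cube -mulnb !natrM !natrX.
  by rewrite mulrACA.
transitivity (Exp (fun t : cube m1 * cube m2 => sgn (g t.1 t.2) ^+ 2 : R)).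
  rewrite -(parseval_of_completeness _ complete); apply: eq_bigr => ST _.
  by congr (_ ^+ 2); apply: eq_Exp => t; rewrite /phi mulrA.
rewrite (eq_Exp (G := fun _ => 1)) => [|t]; last by rewrite sgnE sqrr_sign.
by rewrite Exp_cst // card_cube_pair_gt0.
Qed.

Definition const_gadget {m1 m2} : gadget m1 m2 := fun _ _ => false.

Lemma ghat_const m1 m2 (S : {set 'I_m1}) (T : {set 'I_m2}) :
  ghat const_gadget S T = ((S == set0) && (T == set0))%:R :> R.
Proof.
rewrite /ghat (eq_Exp (G := fun t => chi S t.1 * chi T t.2)) => [|t]; last by rewrite mul1r.
by rewrite Exp_pair_mul !Exp_chi -natrM mulnb.
Qed.

Lemma ghat_xor_set0 : ghat xor_gadget set0 set0 = 0 :> R.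
Proof.
have chi1 (u : cube 1) : sgn (u ord0) = chi [set ord0] u by rewrite /chi big_set1.
rewrite /ghat (eq_Exp (G := fun t => chi [set ord0] t.1 * chi [set ord0] t.2)) => [|t].
  by rewrite Exp_pair_mul Exp_chi -cards_eq0 cards1 mul0r.
by rewrite !chi_set0 !mulr1 sgn_addb !chi1.
Qed.

Lemma Exp_eqb_gadget m1 m2 (h : gadget m1 m2) (b : bool) :
  Exp (fun uv : cube m1 * cube m2 => (h uv.1 uv.2 == b)%:R) =
  (1 + sgn b * ghat h set0 set0) / 2 :> R.
Proof.
have -> : ghat h set0 set0 = Exp (fun uv : cube m1 * cube m2 => sgn (h uv.1 uv.2)) :> R.
  by apply: eq_Exp => uv; rewrite !chi_set0 !mulr1.
transitivity (Exp (fun uv : cube m1 * cube m2 =>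
  2^-1 * 1 + 2^-1 * sgn b * sgn (h uv.1 uv.2) : R)).
  by apply: eq_Exp => uv; rewrite eqb_sgn; field.
rewrite ExpD !ExpZ Exp_cst ?card_cube_pair_gt0 //.
by field.
Qed.

Lemma Exp_par_eq m1 m2 (h : gadget m1 m2) (S : {set 'I_m1}) (T : {set 'I_m2}) (a b : bool) :
  Exp (fun uv : cube m1 * cube m2 =>
         (par S uv.1 == a)%:R * (par T uv.2 == b)%:R * sgn (h uv.1 uv.2)) =
  (ghat h set0 set0 + sgn a * ghat h S set0 + sgn b * ghat h set0 T
   + sgn a * sgn b * ghat h S T) / 4 :> R.
Proof.
rewrite /ghat /Exp !mulrA -!mulrDl !mulr_sumr -!big_split /= mulrAC.
congr (_ / _); rewrite mulr_suml; apply: eq_bigr => uv _.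
by rewrite !eqb_sgn !sgn_par !chi_set0; field.
Qed.

Lemma max_ghat_ge m1 m2 (g : gadget m1 m2) (S : {set 'I_m1}) (T : {set 'I_m2}) :
  `|ghat g S T| <= max_ghat g :> R.
Proof. by rewrite /max_ghat (bigD1 (S, T)) //= le_max lexx. Qed.

Lemma max_ghat_attained m1 m2 (g : gadget m1 m2) :
  exists ST : {set 'I_m1} * {set 'I_m2}, max_ghat g = `|ghat g ST.1 ST.2| :> R.
Proof.
have [mx0|//] : max_ghat g = 0 :> R \/ exists ST, max_ghat g = `|ghat g ST.1 ST.2| :> R.
  apply: (big_ind (fun x => x = 0 \/ exists ST, x = `|ghat g ST.1 ST.2|)) => [||ST _].
  - by left.
  - by move=> x y x_ok y_ok; rewrite maxEle; case: ifP.
  - by right; exists ST.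
by exists (set0, set0); apply/eqP; rewrite eq_le max_ghat_ge andbT mx0 normr_ge0.
Qed.

Lemma max_ghat_sqr_ge m1 m2 (g : gadget m1 m2) : 1 <= 2 ^+ (m1 + m2) * max_ghat g ^+ 2 :> R.
Proof.
apply: (@le_trans _ _ (\sum_(ST : {set 'I_m1} * {set 'I_m2}) max_ghat g ^+ 2)).
  rewrite -(parseval g); apply: ler_sum => -[S T] _ /=.
  rewrite -real_normK ?num_real // lerXn2r ?nnegrE ?normr_ge0 ?max_ghat_ge //.
  exact: le_trans (max_ghat_ge g S T).
by rewrite sumr_const card_prod !card_sets -expnD -[_ *+ _]mulr_natl natrX.
Qed.

Lemma max_ghat_gt0 m1 m2 (g : gadget m1 m2) : 0 < max_ghat g :> R.
Proof.
rewrite lt_def (le_trans (normr_ge0 _) (max_ghat_ge g set0 set0)) andbT.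
by apply: contraTneq (max_ghat_sqr_ge g) => ->; rewrite expr0n mulr0 ler10.
Qed.

Lemma max_ghat_inv_le m1 m2 (g : gadget m1 m2) :
  (max_ghat g)^-1 <= Num.sqrt 2 ^+ (m1 + m2) :> R.
Proof.
have mx_gt0 := max_ghat_gt0 g.
rewrite -ler_sqr ?nnegrE ?invr_ge0 ?exprn_ge0 ?sqrtr_ge0 ?(ltW mx_gt0) //.
rewrite exprAC sqr_sqrtr ?ler0n // exprVn -[_^-1]mul1r ler_pdivrMr ?exprn_gt0 //.
exact: max_ghat_sqr_ge.
Qed.

End Gadgets.

Section Fibers.
Variable R : realType.

Definition blockwise m1 m2 (g : gadget m1 m2) n (xy : blocks n m1 * blocks n m2) : cube n :=
  [ffun i => g (xy.1 i) (xy.2 i)].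

Lemma blockwise_eqE m1 m2 (g : gadget m1 m2) n xy (z : cube n) :
  (blockwise g xy == z) = [forall i, g (xy.1 i) (xy.2 i) == z i].
Proof.
by apply/eqP/eqfunP => [<- i|eq_z]; [rewrite ffunE | apply/ffunP => i; rewrite ffunE].
Qed.

Lemma fiber_blockwise m1 m2 (g : gadget m1 m2) n (C : blocks n m1 -> blocks n m2 -> R) z :
  fiber g C z = (\sum_(xy | blockwise g xy == z) C xy.1 xy.2)
                / #|[set xy | blockwise g xy == z]|%:R.
Proof.
rewrite /fiber (eq_bigl _ _ (fun xy => blockwise_eqE g xy z)); congr (_ / _%:R).
by apply: eq_card => xy; rewrite inE blockwise_eqE.
Qed.

Lemma card_fiber_balanced m1 m2 (g : gadget m1 m2) n (z : cube n) :
  ghat g set0 set0 = 0 :> R ->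
  #|[set xy | blockwise g xy == z]|%:R = #|{: blocks n m1 * blocks n m2}|%:R / 2 ^+ n :> R.
Proof.
move=> balanced.
have -> : #|[set xy | blockwise g xy == z]|%:R =
    #|{: blocks n m1 * blocks n m2}|%:R * Exp (fun xy => (blockwise g xy == z)%:R) :> R.
  rewrite /Exp mulrC divfK; last first.
    by rewrite pnatr_eq0 card_prod !card_ffun card_bool muln_eq0 !expn_eq0.
  rewrite -sum1dep_card natr_sum big_mkcond /=.
  by apply: eq_bigr => xy _; case: (_ == _).
congr (_ * _); under eq_Exp do rewrite blockwise_eqE natr_forall.
rewrite (Exp_ffun_pair_prod (fun i u v => (g u v == z i)%:R)).
under eq_bigr do rewrite Exp_eqb_gadget balanced mulr0 addr0.
by rewrite prodr_const card_ord mul1r exprVn.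
Qed.

Lemma fhat_fiber m1 m2 (g : gadget m1 m2) n (C : blocks n m1 -> blocks n m2 -> R)
    (I : {set 'I_n}) :
  ghat g set0 set0 = 0 :> R ->
  fhat (fiber g C) I =
  Exp (fun xy : blocks n m1 * blocks n m2 =>
         C xy.1 xy.2 * \prod_(i in I) sgn (g (xy.1 i) (xy.2 i))).
Proof.
move=> balanced; rewrite /fhat.
under eq_Exp do rewrite fiber_blockwise card_fiber_balanced //.
rewrite (Exp_fiber_uniform (fun xy => C xy.1 xy.2)) => [|z]; last exact: card_fiber_balanced.
by apply: eq_Exp => xy; congr (_ * _); apply: eq_bigr => i _; rewrite ffunE.
Qed.

Lemma eq_L1k_fiber m1 m2 (g : gadget m1 m2) n k (C C' : blocks n m1 -> blocks n m2 -> R) :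
  C =2 C' -> L1k k (fiber g C) = L1k k (fiber g C').
Proof.
move=> eqC; rewrite /L1k /fhat /fiber.
by under eq_bigr do under eq_Exp do under eq_bigr do rewrite eqC.
Qed.

Lemma normr_fiber_le1 m1 m2 (g : gadget m1 m2) n (C : blocks n m1 -> blocks n m2 -> R) z :
  (forall x y, `|C x y| <= 1) -> `|fiber g C z| <= 1.
Proof. by move=> C_le1; apply: normr_mean_le1 => xy; apply: C_le1. Qed.

Lemma L1k_le n k (f : cube n -> R) :
  (forall z, `|f z| <= 1) -> L1k k f <= #|{: {set 'I_n}}|%:R.
Proof.
move=> f_le1; rewrite /L1k -sum1_card natr_sum big_mkcond /=.
apply: ler_sum => I _; case: (_ == _) => //.
by apply: (normr_mean_le1 predT) => z; rewrite normrM normr_chi mulr1.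
Qed.

Lemma L1k_ge0 n k (f : cube n -> R) : 0 <= L1k k f.
Proof. exact: sumr_ge0. Qed.

End Fibers.

Definition par_blocks n m (S : {set 'I_m}) (x : blocks n m) : blocks n 1 :=
  [ffun i => [ffun => par S (x i)]].

Lemma par_blocks_eqE n m (S : {set 'I_m}) (x : blocks n m) (a : blocks n 1) :
  (par_blocks S x == a) = [forall i, par S (x i) == a i ord0].
Proof.
apply/eqP/forallP => [<- i|eq_a]; first by rewrite !ffunE.
by apply/ffunP => i; apply/ffunP => j; rewrite !ffunE (ord1 j) (eqP (eq_a i)).
Qed.

Section ParityReduction.
Variables (R : realType) (m1 m2 : nat) (g : gadget m1 m2).
Variables (S : {set 'I_m1}) (T : {set 'I_m2}).
Hypotheses (S_neq0 : S != set0) (T_neq0 : T != set0).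
Hypotheses (g00 : ghat g set0 set0 = 0 :> R) (gS0 : ghat g S set0 = 0 :> R)
  (g0T : ghat g set0 T = 0 :> R).

Lemma Exp_par_blocks_eq n (ab : blocks n 1 * blocks n 1) (I : {set 'I_n}) :
  Exp (fun xy : blocks n m1 * blocks n m2 =>
         (par_blocks S xy.1 == ab.1)%:R * (par_blocks T xy.2 == ab.2)%:R
         * \prod_(i in I) sgn (g (xy.1 i) (xy.2 i))) =
  ghat g S T ^+ #|I| * \prod_(i in I) sgn (xor_gadget (ab.1 i) (ab.2 i)) / 4 ^+ n :> R.
Proof.
(* Blocks outside I carry the constant gadget, whose only nonzero coefficient
   is at (set0, set0), so that every block is an instance of Exp_par_eq. *)
pose h i : gadget m1 m2 := if i \in I then g else const_gadget.
transitivity (Exp (fun xy : blocks n m1 * blocks n m2 => \prod_i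
    ((par S (xy.1 i) == ab.1 i ord0)%:R * (par T (xy.2 i) == ab.2 i ord0)%:R
     * sgn (h i (xy.1 i) (xy.2 i)) : R))).
  apply: eq_Exp => xy; rewrite !par_blocks_eqE !natr_forall !big_split /=.
  by congr (_ * _); rewrite big_mkcond; apply: eq_bigr => i _; rewrite /h; case: (i \in I).
rewrite (Exp_ffun_pair_prod (fun i (u : cube m1) (v : cube m2) =>
  (par S u == ab.1 i ord0)%:R * (par T v == ab.2 i ord0)%:R * sgn (h i u v) : R)).
have block i : Exp (fun uv : cube m1 * cube m2 => (par S uv.1 == ab.1 i ord0)%:R
      * (par T uv.2 == ab.2 i ord0)%:R * sgn (h i uv.1 uv.2)) =
    (if i \in I then ghat g S T * sgn (xor_gadget (ab.1 i) (ab.2 i)) else 1) / 4 :> R.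
  rewrite Exp_par_eq /h; case: (i \in I).
    by rewrite g00 gS0 g0T !mulr0 !add0r /xor_gadget sgn_addb [ghat _ _ _ * _]mulrC.
  by rewrite !ghat_const !eqxx (negbTE S_neq0) (negbTE T_neq0) !mulr0 !addr0.
under eq_bigr do rewrite block.
by rewrite prodf_div prodr_const card_ord -big_mkcond big_split prodr_const.
Qed.

Lemma Exp_par_blocks n (Pi : blocks n 1 -> blocks n 1 -> R) (I : {set 'I_n}) :
  Exp (fun xy : blocks n m1 * blocks n m2 =>
         Pi (par_blocks S xy.1) (par_blocks T xy.2) * \prod_(i in I) sgn (g (xy.1 i) (xy.2 i))) =
  ghat g S T ^+ #|I| * Exp (fun ab : blocks n 1 * blocks n 1 =>
         Pi ab.1 ab.2 * \prod_(i in I) sgn (xor_gadget (ab.1 i) (ab.2 i))).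
Proof.
have expand a b : Pi a b = \sum_(ab : blocks n 1 * blocks n 1)
    Pi ab.1 ab.2 * ((a == ab.1)%:R * (b == ab.2)%:R).
  rewrite (bigD1 (a, b)) //= !eqxx !mulr1 big1 ?addr0 // => -[a' b'].
  by rewrite xpair_eqE negb_and => /orP[] /negbTE; rewrite eq_sym => ->; rewrite ?(mul0r, mulr0).
under eq_Exp do rewrite expand mulr_suml.
rewrite Exp_sum.
under eq_bigr => ab _ do under eq_Exp do rewrite -mulrA.
under eq_bigr => ab _ do rewrite ExpZ Exp_par_blocks_eq.
have card_ab : #|{: blocks n 1 * blocks n 1}|%:R = 4 ^+ n :> R.
  by rewrite card_prod !card_ffun card_bool !card_ord -expnMn natrX.
rewrite /Exp card_ab mulrA mulr_sumr mulr_suml; apply: eq_bigr => ab _.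
ring.
Qed.

Lemma L1k_fiber_par_blocks n k (C : blocks n 1 -> blocks n 1 -> R) :
  L1k k (fiber g (fun x y => C (par_blocks S x) (par_blocks T y))) =
  `|ghat g S T| ^+ k * L1k k (fiber xor_gadget C).
Proof.
rewrite /L1k mulr_sumr; apply: eq_bigr => I /eqP <-.
by rewrite !fhat_fiber ?ghat_xor_set0 // Exp_par_blocks normrM normrX.
Qed.

End ParityReduction.

Fixpoint proto_comap A B A' B' (fa : A' -> A) (fb : B' -> B) (p : proto A B) : proto A' B' :=
  match p with
  | Leaf b => Leaf b
  | NodeA f l r => NodeA (f \o fa) (proto_comap fa fb l) (proto_comap fa fb r)
  | NodeB f l r => NodeB (f \o fb) (proto_comap fa fb l) (proto_comap fa fb r)
  end.

Lemma run_proto_comap A B A' B' (fa : A' -> A) (fb : B' -> B) p x y :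
  run (proto_comap fa fb p) x y = run p (fa x) (fb y).
Proof. by elim: p => [b|f l IHl r IHr|f l IHl r IHr] //=; rewrite IHl IHr. Qed.

Lemma depth_proto_comap A B A' B' (fa : A' -> A) (fb : B' -> B) p :
  depth (proto_comap fa fb p) = depth p.
Proof. by elim: p => [b|f l IHl r IHr|f l IHl r IHr] //=; rewrite IHl IHr. Qed.

Section RandomizedProtocols.
Variable R : realType.

Definition rproto_comap A B A' B' (fa : A' -> A) (fb : B' -> B) (P : rproto R A B) :
  rproto R A' B' := [seq (wp.1, proto_comap fa fb wp.2) | wp <- P].

Lemma rvalue_comap A B A' B' (fa : A' -> A) (fb : B' -> B) P x y :
  rvalue (rproto_comap fa fb P) x y = rvalue P (fa x) (fb y).
Proof. by rewrite /rvalue big_map; apply: eq_bigr => wp _; rewrite run_proto_comap. Qed.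

Lemma rproto_ok_comap A B A' B' (fa : A' -> A) (fb : B' -> B) d P :
  rproto_ok d P -> rproto_ok d (rproto_comap fa fb P).
Proof.
case=> w_ge0 w_sum1 depth_le; split; rewrite ?all_map ?big_map //.
by apply: sub_all depth_le => wp /=; rewrite depth_proto_comap.
Qed.

Lemma rproto_ok_leaf {A B} d b : rproto_ok d [:: (1 : R, @Leaf A B b)].
Proof. by split; rewrite /= ?big_seq1 ?ler01. Qed.

Lemma normr_rvalue_le1 A B d (P : rproto R A B) x y : rproto_ok d P -> `|rvalue P x y| <= 1.
Proof.
case=> w_ge0 w_sum1 _; rewrite /rvalue -w_sum1 {w_sum1}.
elim: P w_ge0 => [|wp P IHP] /=; first by rewrite !big_nil normr0.
case/andP=> wp_ge0 /IHP P_le; rewrite !big_cons (le_trans (ler_normD _ _)) // lerD //.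
by rewrite normrM normr_sgn mulr1 ger0_norm.
Qed.

Section Supremum.
Variables (m1 m2 : nat) (g : gadget m1 m2) (k d n : nat).

Let values := [set L1k k (fiber g (rvalue P)) | P in
  [set P : rproto R (blocks n m1) (blocks n m2) | rproto_ok d P]]%classic.

Lemma has_ubound_values : has_ubound values.
Proof.
exists #|{: {set 'I_n}}|%:R => _ [P okP <-]; apply: L1k_le => z.
by apply: normr_fiber_le1 => x y; apply: normr_rvalue_le1 okP.
Qed.

Lemma L1k_gadget_ub (P : rproto R (blocks n m1) (blocks n m2)) :
  rproto_ok d P -> L1k k (fiber g (rvalue P)) <= L1k_gadget g k d n.
Proof. by move=> okP; apply: (ub_le_sup has_ubound_values); exists P. Qed.

Lemma L1k_gadget_le (c : R) :
  (forall P : rproto R (blocks n m1) (blocks n m2),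
     rproto_ok d P -> L1k k (fiber g (rvalue P)) <= c) ->
  L1k_gadget g k d n <= c.
Proof.
move=> values_le; apply: ge_sup => [|_ [P okP <-]]; last exact: values_le.
by eexists; exists [:: (1, Leaf false)]; first exact: rproto_ok_leaf.
Qed.

Lemma L1k_gadget_ge0 : 0 <= L1k_gadget g k d n :> R.
Proof. by apply: le_trans (L1k_gadget_ub (rproto_ok_leaf d false)); apply: L1k_ge0. Qed.

End Supremum.

End RandomizedProtocols.

Theorem theorem7p5 (R : realType) (m1 m2 : nat) (g : gadget m1 m2) :
  (forall (S : {set 'I_m1}) (T : {set 'I_m2}),
      (S == finset.set0) || (T == finset.set0) -> ghat (R := R) g S T = 0) ->
  forall k d n : nat,
    L1k_gadget (R := R) xor_gadget k d n
      <= (max_ghat (R := R) g) ^- k * L1k_gadget (R := R) g k d n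
    /\ (max_ghat (R := R) g) ^- k * L1k_gadget (R := R) g k d n
      <= Num.sqrt 2 ^+ ((m1 + m2) * k) * L1k_gadget (R := R) g k d n.
Proof.
move=> low_free k d n.
have mx_gt0 := max_ghat_gt0 R g.
have [[S T] /= mxE] := max_ghat_attained R g.
have [S_neq0 T_neq0] : S != set0 /\ T != set0.
  by split; apply/negP => /eqP eq0; move: mx_gt0;
    rewrite mxE low_free ?eq0 ?eqxx ?orbT // normr0 ltxx.
have g00 : ghat g set0 set0 = 0 :> R by apply: low_free; rewrite eqxx.
have gS0 : ghat g S set0 = 0 :> R by apply: low_free; rewrite eqxx orbT.
have g0T : ghat g set0 T = 0 :> R by apply: low_free; rewrite eqxx.
split.
  apply: L1k_gadget_le => P okP.
  have := L1k_gadget_ub g k (rproto_ok_comap (par_blocks S) (par_blocks T) okP).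
  rewrite (eq_L1k_fiber _ _ (rvalue_comap _ _ P)).
  rewrite (L1k_fiber_par_blocks S_neq0 T_neq0 g00 gS0 g0T) -mxE.
  by rewrite ler_pdivlMl ?exprn_gt0.
apply: ler_wpM2r; first exact: L1k_gadget_ge0.
rewrite -exprVn exprM lerXn2r ?nnegrE ?invr_ge0 ?exprn_ge0 ?sqrtr_ge0 ?(ltW mx_gt0) //.
exact: max_ghat_inv_le.
Qed.
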